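(* Let $D\geq 4$ and $n\geq 2$ be integers, and define the scalar density $$\mathcal{S}_{(n)}=\sum_{\substack{i=0\\ i\neq 1}}^{n}\frac{\alpha^{(n)}_{i,0}}{\beta_{i,0}}\mathcal{R}_{0,n-i,i}+\sum_{i=0}^{n-2}\frac{\alpha^{(n)}_{i,2}}{\beta_{i,2}}\mathcal{R}_{2,n-i-2,i},$$ with $$\alpha^{(n)}_{i,0}=-\frac{2^{2(1-n)+i}(i-1)[2-i+D(i-1)]\,n!}{i!(n-i)!(D-1)^{n-1}(D-2)},\qquad \alpha^{(n)}_{i,2}=\frac{2^{2(2-n)+i}(i+1)(i+2)\,n!}{(i+2)!(n-i-2)!(D-1)^{n-2}(D-2)}.$$ Then for every function $f(r)$, $$\mathcal{S}_{(n)}|_f=r^{2-D}\frac{\mathrm{d}}{\mathrm{d}r}\Big[r^{D-1}\Big(B+\tfrac{D-4}{4}\psi\Big)^{n-1}\Big(2(n-2)B-(D-4+2n)\psi\Big)\Big],$$ so in particular $\mathcal{S}_{(n)}$ is of the GQTG class.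
   Context: Work in $D$ spacetime dimensions. Let $\hat R_a{}^b=R_a{}^b-\frac{1}{D}\delta_a^bR$ be the traceless Ricci tensor and $W_{ab}{}^{cd}$ the Weyl tensor. Define the tensors (with the index symmetries of the Riemann tensor) $${}^{(1)}\mathcal{K}_{ab}{}^{cd}=\hat R_{[a}{}^{[c}\delta_{b]}{}^{d]},\quad {}^{(2)}\mathcal{K}_{ab}{}^{cd}=R\,\delta_{[a}{}^{[c}\delta_{b]}{}^{d]},\quad {}^{(3)}\mathcal{K}_{ab}{}^{cd}=W_{ab}{}^{cd}.$$ For $q\geq1$ let $({}^{(i)}\mathcal{K}^q)_{ab}{}^{cd}={}^{(i)}\mathcal{K}_{ab}{}^{a_1b_1}\,{}^{(i)}\mathcal{K}_{a_1b_1}{}^{a_2b_2}\cdots{}^{(i)}\mathcal{K}_{a_{q-1}b_{q-1}}{}^{cd}$ ($q$ factors), and $({}^{(i)}\mathcal{K}^0)_{ab}{}^{cd}=\delta_{[a}{}^{[c}\delta_{b]}{}^{d]}$. Set $\mathcal{R}_{q,m,p}=({}^{(1)}\mathcal{K}^q)_{ab}{}^{cd}({}^{(2)}\mathcal{K}^m)_{cd}{}^{ef}({}^{(3)}\mathcal{K}^p)_{ef}{}^{ab}$. For integers $p,q\geq0$ define $$\beta_{p,q}=\frac{(-1)^q2^p}{D^q[(D-1)(D-2)]^p}\Big[(-1)^{p+q}2^{p+q-1}(D-2)(D-3)+2^{1-q}(D-2)(D-3)^p(D-4)^q+(-1)^p(D-2)^{p+q}(D-3)^p\Big].$$ Consider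 the metric $\mathrm{d}s^2=-f(r)\mathrm{d}t^2+\mathrm{d}r^2/f(r)+r^2\mathrm{d}\Sigma^2_{k}$, where $\mathrm{d}\Sigma^2_k$ is the metric of a $(D-2)$-dimensional space of constant sectional curvature $k\in\{1,0,-1\}$; $\mathcal{L}|_f$ denotes the evaluation of a scalar invariant on it, and $A=f''/2$, $B=-f'/(2r)$, $\psi=(k-f)/r^2$. A density $\mathcal{L}$ is of the GQTG class if $r^{D-2}\mathcal{L}|_f=\frac{\mathrm{d}}{\mathrm{d}r}F_0(r,f,f')$ for some function $F_0$, for all $f$. *)

From HB Require Import structures.
From mathcomp Require Import all_boot all_order all_algebra.
From mathcomp Require Import all_classical all_reals all_analysis.
Set Implicit Arguments. Unset Strict Implicit. Unset Printing Implicit Defensive.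
Import Order.TTheory GRing.Theory Num.Theory.
Local Open Scope ring_scope.

Section Tensors.
Variables (R : realType) (D : nat).

(* Mixed tensors T_{ab}^{cd} with frame indices a,b,c,d in {0,..,D-1}. *)
Definition tens := 'I_D -> 'I_D -> 'I_D -> 'I_D -> R.

Definition delta (i j : 'I_D) : R := (i == j)%:R.

Definition idT : tens := fun a b c d =>
  (delta a c * delta b d - delta a d * delta b c) / 2.

Definition asym (T : tens) : tens := fun a b c d =>
  (T a b c d - T b a c d - T a b d c + T b a d c) / 4.

Definition tmul (S T : tens) : tens := fun a b c d =>
  \sum_(e < D) \sum_(f < D) S a b e f * T e f c d.

Definition tpow (T : tens) (q : nat) : tens := iter q (fun X => tmul X T) idT.

Definition ricci (Rm : tens) (a c : 'I_D) : R := \sum_(b < D) Rm a b c b.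
Definition rscal (Rm : tens) : R := \sum_(a < D) ricci Rm a a.
Definition tricci (Rm : tens) (a c : 'I_D) : R :=
  ricci Rm a c - delta a c * rscal Rm / D%:R.

Definition weyl (Rm : tens) : tens := fun a b c d =>
  Rm a b c d
  - 4 / (D%:R - 2) * asym (fun a b c d => ricci Rm a c * delta b d) a b c d
  + 2 * rscal Rm / ((D%:R - 1) * (D%:R - 2)) * idT a b c d.

Definition K1 (Rm : tens) : tens := asym (fun a b c d => tricci Rm a c * delta b d).
Definition K2 (Rm : tens) : tens := fun a b c d => rscal Rm * idT a b c d.
Definition K3 (Rm : tens) : tens := weyl Rm.

Definition Rqmp (Rm : tens) (q m p : nat) : R :=
  \sum_(a < D) \sum_(b < D) \sum_(c < D) \sum_(d < D) \sum_(e < D) \sum_(f < D)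
    tpow (K1 Rm) q a b c d * tpow (K2 Rm) m c d e f * tpow (K3 Rm) p e f a b.

End Tensors.

Definition Dr (R : realType) (D : nat) : R := D%:R.

Definition beta (R : realType) (D p q : nat) : R :=
  let d : R := D%:R in
  (-1) ^+ q * 2 ^+ p / (d ^+ q * ((d - 1) * (d - 2)) ^+ p) *
  ( (-1) ^+ (p + q) * (2 : R) ^ ((p + q)%:Z - 1) * (d - 2) * (d - 3)
  + (2 : R) ^ (1 - q%:Z) * (d - 2) * (d - 3) ^+ p * (d - 4) ^+ q
  + (-1) ^+ p * (d - 2) ^+ (p + q) * (d - 3) ^+ p ).

Definition alpha0 (R : realType) (D n i : nat) : R :=
  let d : R := D%:R in
  - ((2 : R) ^ (2 * (1 - n%:Z) + i%:Z) * (i%:R - 1) * (2 - i%:R + d * (i%:R - 1))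
      * (n`!)%:R)
  / ((i`!)%:R * ((n - i)`!)%:R * (d - 1) ^+ (n - 1) * (d - 2)).

Definition alpha2 (R : realType) (D n i : nat) : R :=
  let d : R := D%:R in
  ((2 : R) ^ (2 * (2 - n%:Z) + i%:Z) * (i%:R + 1) * (i%:R + 2) * (n`!)%:R)
  / (((i + 2)`!)%:R * ((n - i - 2)`!)%:R * (d - 1) ^+ (n - 2) * (d - 2)).

Definition S_n (R : realType) (D n : nat) (Rm : tens R D) : R :=
  \sum_(0 <= i < n.+1 | i != 1%N)
      alpha0 R D n i / beta R D i 0 * Rqmp Rm 0 (n - i) i
  + \sum_(0 <= i < n.-1)
      alpha2 R D n i / beta R D i 2 * Rqmp Rm 2 (n - i - 2) i.

(* Mixed Riemann tensor R_{ab}^{cd} of ds^2 = -f dt^2 + dr^2/f + r^2 dSigma_k^2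
   at radius r, in the orthonormal frame (index 0 = t, 1 = r, >= 2 = Sigma),
   given the values f0 = f(r), f1 = f'(r), f2 = f''(r):
   R_{ab}^{cd} = K_{ab} (delta_a^c delta_b^d - delta_a^d delta_b^c), with
   K_{tr} = -f''/2, K_{ti} = K_{ri} = -f'/(2r), K_{ij} = (k - f)/r^2. *)
Definition riem_f (R : realType) (D : nat) (k r f0 f1 f2 : R) : tens R D :=
  fun a b c d =>
    let sec : R :=
      if ((a < 2)%N && (b < 2)%N) then - f2 / 2
      else if ((a < 2)%N || (b < 2)%N) then - f1 / (2 * r)
      else (k - f0) / r ^+ 2 in
    sec * (@delta R D a c * @delta R D b d - @delta R D a d * @delta R D b c).

Definition eval_f (R : realType) (D : nat) (L : tens R D -> R) (k : R)
  (f : R -> R) (r : R) : R :=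
  L (@riem_f R D k r (f r) (derive1 f r) (derive1 (derive1 f) r)).

Definition twice_diff (R : realType) (f : R -> R) : Prop :=
  (forall x, derivable f x 1) /\ (forall x, derivable (derive1 f) x 1).

Definition is_GQTG (R : realType) (D : nat) (L : tens R D -> R) (k : R) : Prop :=
  exists F0 : R -> R -> R -> R,
    forall f : R -> R, twice_diff f -> forall r : R, 0 < r ->
      r ^+ (D - 2) * eval_f L k f r
      = derive1 (fun s => F0 s (f s) (derive1 f s)) r.

(* On the static ansatz the Riemann tensor is diagonal on bivectors,
   R_ab^cd = 2 K_ab delta_[a^[c delta_b]^d], with K_ab depending only on
   whether a and b lie in the (t, r) block.  Such tensors contract
   eigenvalue-wise, so every R_{q,m,p} is a weighted sum, over the three kinds
   of index pairs, of products of eigenvalues of the traceless Ricci, scalar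
   and Weyl parts.  All Weyl eigenvalues are multiples of w = A + 2B - psi and
   all traceless Ricci eigenvalues multiples of tau = -A + (D-4)B - (D-3)psi,
   whence R_{0,m,p} = R^m w^p beta_{p,0} and R_{2,m,p} = tau^2 R^m w^p beta_{p,2}:
   beta is exactly this normalisation, and it does not vanish for D >= 4.
   After dividing by beta, the alpha-weighted sums are binomial sums in
   R + 2w = 4(D-1)(B + (D-4)psi/4), and they collapse to the same polynomial
   in B, psi, A as r^(2-D) times the derivative of the flux. *)

From HB Require Import structures.
From mathcomp Require Import all_boot all_order all_algebra.
From mathcomp Require Import all_classical all_reals all_analysis.
From mathcomp Require Import ring lra zify.
Import Order.TTheory GRing.Theory Num.Theory.
Set Implicit Arguments. Unset Strict Implicit. Unset Printing Implicit Defensive.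
Local Open Scope ring_scope.

Section DiagonalTensors.
Variables (R : realType) (D : nat).

Definition diag_tens (l : 'I_D -> 'I_D -> R) : tens R D :=
  fun a b c d => l a b * idT R a b c d.

Lemma deltaxx (a : 'I_D) : delta R a a = 1.
Proof. by rewrite /delta eqxx. Qed.

Lemma sum_delta (a : 'I_D) (F : 'I_D -> R) :
  \sum_(e < D) delta R a e * F e = F a.
Proof.
rewrite (bigD1 a) //= deltaxx mul1r big1 ?addr0 // => e.
by rewrite eq_sym /delta => /negbTE ->; rewrite mul0r.
Qed.

Lemma sum_idT (a b : 'I_D) (G : 'I_D -> 'I_D -> R) :
  \sum_(e < D) \sum_(f < D) idT R a b e f * G e f = (G a b - G b a) / 2.
Proof.
transitivity (\sum_(e < D) (delta R a e * G e b - delta R b e * G e a) / 2).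
  apply: eq_bigr => e _.
  transitivity (\sum_(f < D) ((delta R a e / 2) * (delta R b f * G e f)
     - (delta R b e / 2) * (delta R a f * G e f))).
    by apply: eq_bigr => f _; rewrite /idT; ring.
  by rewrite sumrB -!mulr_sumr !sum_delta; ring.
by rewrite -mulr_suml sumrB !sum_delta.
Qed.

Lemma idT_swap (a b c d : 'I_D) : idT R b a c d = - idT R a b c d.
Proof. by rewrite /idT; ring. Qed.

Lemma idT_diag : @idT R D = diag_tens (fun _ _ => 1).
Proof. by do 4!apply: funext => ?; rewrite /diag_tens mul1r. Qed.

Lemma tmul_diag (l m : 'I_D -> 'I_D -> R) : (forall a b, m a b = m b a) ->
  tmul (diag_tens l) (diag_tens m) = diag_tens (fun a b => l a b * m a b).
Proof.
move=> m_sym; apply: funext => a; apply: funext => b.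
apply: funext => c; apply: funext => d.
transitivity (l a b * \sum_(e < D) \sum_(f < D)
   idT R a b e f * (m e f * idT R e f c d)).
  rewrite /tmul /diag_tens mulr_sumr; apply: eq_bigr => e _; rewrite mulr_sumr.
  by apply: eq_bigr => f _; ring.
by rewrite sum_idT (idT_swap a b) (m_sym b a) /diag_tens; field.
Qed.

Lemma tpow_diag (l : 'I_D -> 'I_D -> R) q : (forall a b, l a b = l b a) ->
  tpow (diag_tens l) q = diag_tens (fun a b => l a b ^+ q).
Proof.
move=> l_sym; elim: q => [|q IHq]; first by rewrite /tpow /= idT_diag.
rewrite /tpow iterS -/(tpow _ q) IHq tmul_diag //.
by congr diag_tens; do 2!apply: funext => ?; rewrite exprSr.
Qed.

Lemma Rqmp_diag (Rm : tens R D) (l1 l2 l3 : 'I_D -> 'I_D -> R) q m p :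
  (forall a b, l1 a b = l1 b a) -> (forall a b, l2 a b = l2 b a) ->
  (forall a b, l3 a b = l3 b a) ->
  K1 Rm = diag_tens l1 -> K2 Rm = diag_tens l2 -> K3 Rm = diag_tens l3 ->
  Rqmp Rm q m p = \sum_(a < D) \sum_(b < D)
     l1 a b ^+ q * l2 a b ^+ m * l3 a b ^+ p * idT R a b a b.
Proof.
move=> l1_sym l2_sym l3_sym eK1 eK2 eK3.
rewrite /Rqmp eK1 eK2 eK3 !tpow_diag //.
apply: eq_bigr => a _; apply: eq_bigr => b _.
have l3p_sym a' b' : l3 a' b' ^+ p = l3 b' a' ^+ p by rewrite l3_sym.
have l23_sym a' b' :
    l2 a' b' ^+ m * l3 a' b' ^+ p = l2 b' a' ^+ m * l3 b' a' ^+ p.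
  by rewrite l2_sym l3_sym.
transitivity (tmul (diag_tens (fun a b => l1 a b ^+ q))
  (tmul (diag_tens (fun a b => l2 a b ^+ m)) (diag_tens (fun a b => l3 a b ^+ p)))
  a b a b).
  apply: eq_bigr => c _; apply: eq_bigr => d _.
  rewrite /tmul mulr_sumr; apply: eq_bigr => e _; rewrite mulr_sumr.
  by apply: eq_bigr => f _; rewrite mulrA.
by rewrite (tmul_diag _ l3p_sym) (tmul_diag _ l23_sym) /diag_tens mulrA.
Qed.

End DiagonalTensors.

Ltac neq0 := rewrite ?eqb_id; first [done | (repeat (apply/andP; split);
  repeat (first [apply: mulf_neq0 | apply: expf_neq0 | apply: invr_neq0]);
  apply/eqP => ?; lra)].

Lemma natr_ge4 (R : realType) (D : nat) : (4 <= D)%N -> 4 <= D%:R :> R.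
Proof. by rewrite -(ler_nat R). Qed.

Section StaticAnsatz.
Variables (R : realType) (D : nat) (k r f0 f1 f2 : R).
Local Notation d := (D%:R : R).

Definition sec_tr : R := - f2 / 2.
Definition sec_mixed : R := - f1 / (2 * r).
Definition sec_sph : R := (k - f0) / r ^+ 2.

(* [x] and [y] tell whether the two frame indices lie in the (t, r) block. *)
Definition sec (x y : bool) : R :=
  if x && y then sec_tr else if x || y then sec_mixed else sec_sph.
Definition ricci_eig (x : bool) : R :=
  if x then sec_tr + (d - 2) * sec_mixed else 2 * sec_mixed + (d - 3) * sec_sph.
Definition rscal_f : R := 2 * ricci_eig true + (d - 2) * ricci_eig false.
Definition tricci_eig (x : bool) : R := ricci_eig x - rscal_f / d.
Definition K1_eig (x y : bool) : R := (tricci_eig x + tricci_eig y) / 2.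
Definition weyl_eig (x y : bool) : R :=
  2 * sec x y - 4 / (d - 2) * ((ricci_eig x + ricci_eig y) / 2)
  + 2 * rscal_f / ((d - 1) * (d - 2)).

Lemma sec_sym x y : sec x y = sec y x.
Proof. by rewrite /sec andbC orbC. Qed.

Lemma riem_f_diag : @riem_f R D k r f0 f1 f2 =
  diag_tens (fun a b : 'I_D => 2 * sec (a < 2)%N (b < 2)%N).
Proof.
do 4!apply: funext => ?; rewrite /riem_f /diag_tens /idT /sec.
by set s := (if _ then _ else _); field.
Qed.

Lemma sum_block (F : bool -> R) : (2 <= D)%N ->
  \sum_(b < D) F (b < 2)%N = 2 * F true + (d - 2) * F false.
Proof.
move=> D_ge2; rewrite -(big_mkord xpredT (fun b => F (b < 2)%N)).
rewrite (big_cat_nat (leq0n 2) D_ge2) /= !big_nat_recl //= big_geq //.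
rewrite (@eq_big_nat _ _ _ 2 D _ (fun=> F false)); last first.
  by move=> i /andP [i_ge2 _]; rewrite ltnNge i_ge2.
by rewrite sumr_const_nat -[F false *+ _]mulr_natr natrB //; ring.
Qed.

Lemma ricci_diag (l : 'I_D -> 'I_D -> R) (a c : 'I_D) :
  ricci (diag_tens l) a c = delta R a c * (\sum_(b < D) l a b - l a a) / 2.
Proof.
transitivity (\sum_(b < D) (delta R a c / 2 * l a b
    - delta R a b * (delta R b c * l a b / 2))).
  by apply: eq_bigr => b _; rewrite /diag_tens /idT deltaxx; ring.
by rewrite sumrB -mulr_sumr sum_delta; ring.
Qed.

Hypothesis D_ge4 : (4 <= D)%N.
Let D_ge2 : (2 <= D)%N. Proof. by apply: leq_trans D_ge4. Qed.

Lemma ricci_riem_f (a c : 'I_D) :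
  ricci (@riem_f R D k r f0 f1 f2) a c = delta R a c * ricci_eig (a < 2)%N.
Proof.
rewrite riem_f_diag ricci_diag (sum_block (fun y => 2 * sec (a < 2)%N y)) //.
by rewrite /sec /ricci_eig; case: (a < 2)%N => /=; field.
Qed.

Lemma rscal_riem_f : rscal (@riem_f R D k r f0 f1 f2) = rscal_f.
Proof.
transitivity (\sum_(a < D) ricci_eig (a < 2)%N); last exact: sum_block.
by apply: eq_bigr => a _; rewrite ricci_riem_f deltaxx mul1r.
Qed.

Lemma K1_riem_f : K1 (@riem_f R D k r f0 f1 f2) =
  diag_tens (fun a b : 'I_D => K1_eig (a < 2)%N (b < 2)%N).
Proof.
have d_ge4 := natr_ge4 R D_ge4; do 4!apply: funext => ?.
rewrite /K1 /asym /diag_tens /idT /K1_eig /tricci_eig /tricci.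
by rewrite !ricci_riem_f rscal_riem_f; field; neq0.
Qed.

Lemma K2_riem_f : K2 (@riem_f R D k r f0 f1 f2) = diag_tens (fun _ _ => rscal_f).
Proof. by do 4!apply: funext => ?; rewrite /K2 /diag_tens rscal_riem_f. Qed.

Lemma K3_riem_f : K3 (@riem_f R D k r f0 f1 f2) =
  diag_tens (fun a b : 'I_D => weyl_eig (a < 2)%N (b < 2)%N).
Proof.
have d_ge4 := natr_ge4 R D_ge4; do 4!apply: funext => ?.
rewrite /K3 /weyl /asym !ricci_riem_f rscal_riem_f riem_f_diag.
by rewrite /diag_tens /idT /weyl_eig; field; neq0.
Qed.

Lemma sum_pairs_block (H : bool -> bool -> R) :
  \sum_(a < D) \sum_(b < D) H (a < 2)%N (b < 2)%N * idT R a b a b =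
  (2 * (2 * H true true + (d - 2) * H true false - H true true)
   + (d - 2) * (2 * H false true + (d - 2) * H false false - H false false)) / 2.
Proof.
transitivity (\sum_(a < D) (2 * H (a < 2)%N true + (d - 2) * H (a < 2)%N false
   - H (a < 2)%N (a < 2)%N) / 2); last first.
  rewrite (sum_block (fun x => (2 * H x true + (d - 2) * H x false - H x x) / 2))
    //.
  by ring.
apply: eq_bigr => a _.
transitivity (\sum_(b < D) (H (a < 2)%N (b < 2)%N / 2
   - delta R a b * (delta R b a * H (a < 2)%N (b < 2)%N / 2))).
  by apply: eq_bigr => b _; rewrite /idT !deltaxx; ring.
rewrite sumrB -mulr_suml sum_delta deltaxx.
rewrite (sum_block (fun y => H (a < 2)%N y)) //.
by ring.
Qed.

Lemma Rqmp_riem_f q m p :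
  Rqmp (@riem_f R D k r f0 f1 f2) q m p =
  let H x y := K1_eig x y ^+ q * rscal_f ^+ m * weyl_eig x y ^+ p in
  (2 * (2 * H true true + (d - 2) * H true false - H true true)
   + (d - 2) * (2 * H false true + (d - 2) * H false false - H false false)) / 2.
Proof.
rewrite (Rqmp_diag q m p _ _ _ K1_riem_f K2_riem_f K3_riem_f) //.
- exact: (sum_pairs_block
    (fun x y => K1_eig x y ^+ q * rscal_f ^+ m * weyl_eig x y ^+ p)).
- by move=> a b; rewrite /K1_eig addrC.
- by move=> a b; rewrite /weyl_eig sec_sym [ricci_eig (b < 2)%N + _]addrC.
Qed.

End StaticAnsatz.

Lemma exprz_pred (R : realType) (x : R) (p : nat) :
  x != 0 -> x ^ (p%:Z - 1) = x ^+ p / x.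
Proof. by move=> x_neq0; rewrite expfzDr // exprN1 -exprnP. Qed.

Section Eigenvalues.
Variables (R : realType) (D : nat) (k r f0 f1 f2 : R).
Hypothesis D_ge4 : (4 <= D)%N.
Local Notation d := (D%:R : R).
Local Notation sec_tr := (sec_tr f2).
Local Notation sec_mixed := (sec_mixed r f1).
Local Notation sec_sph := (sec_sph k r f0).
Local Notation rscal_f := (rscal_f D k r f0 f1 f2).

Definition weyl_amp : R := - sec_tr + 2 * sec_mixed - sec_sph.
Definition tricci_amp : R := sec_tr + (d - 4) * sec_mixed - (d - 3) * sec_sph.
Let weyl_unit : R := 2 * weyl_amp / ((d - 1) * (d - 2)).

Lemma weyl_eigE :
  [/\ weyl_eig D k r f0 f1 f2 true true = weyl_unit * (-1 * ((d - 2) * (d - 3))),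
      weyl_eig D k r f0 f1 f2 true false = weyl_unit * (d - 3),
      weyl_eig D k r f0 f1 f2 false true = weyl_unit * (d - 3) &
      weyl_eig D k r f0 f1 f2 false false = weyl_unit * (-1 * 2)].
Proof.
have d_ge4 := natr_ge4 R D_ge4.
by split; rewrite /weyl_eig /sec /ricci_eig /rscal_f /weyl_unit /weyl_amp /=;
  field; neq0.
Qed.

Lemma K1_eigE :
  [/\ K1_eig D k r f0 f1 f2 true true = (d - 2) / d * tricci_amp,
      K1_eig D k r f0 f1 f2 true false = (d - 4) / (2 * d) * tricci_amp,
      K1_eig D k r f0 f1 f2 false true = (d - 4) / (2 * d) * tricci_amp &
      K1_eig D k r f0 f1 f2 false false = -2 / d * tricci_amp].
Proof.
have d_ge4 := natr_ge4 R D_ge4.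
by split; rewrite /K1_eig /tricci_eig /ricci_eig /rscal_f /tricci_amp /=;
  field; neq0.
Qed.

Lemma Rqmp0_riem_f m p :
  Rqmp (@riem_f R D k r f0 f1 f2) 0 m p =
  rscal_f ^+ m * weyl_amp ^+ p * beta R D p 0.
Proof.
have d_ge4 := natr_ge4 R D_ge4.
rewrite Rqmp_riem_f //=; have [-> -> -> ->] := weyl_eigE.
rewrite /beta /= !addn0 !expr0 exprz_pred; last by neq0.
by rewrite subr0 expr1z /weyl_unit !exprMn !exprVn !exprMn; field; neq0.
Qed.

Lemma Rqmp2_riem_f m p :
  Rqmp (@riem_f R D k r f0 f1 f2) 2 m p =
  tricci_amp ^+ 2 * rscal_f ^+ m * weyl_amp ^+ p * beta R D p 2.
Proof.
have d_ge4 := natr_ge4 R D_ge4.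
rewrite Rqmp_riem_f //=.
have [-> -> -> ->] := weyl_eigE; have [-> -> -> ->] := K1_eigE.
rewrite /beta /= exprz_pred; last by neq0.
rewrite (_ : 1 - 2%:Z = -1) // exprN1 /weyl_unit !exprD !exprMn !exprVn !exprMn.
by field; neq0.
Qed.

End Eigenvalues.

Lemma signr_mulr_addr_neq0 (R : realFieldType) (p : nat) (x y : R) :
  0 <= y -> 0 < x -> (odd p -> y < x) -> (-1) ^+ p * x + y != 0.
Proof.
move=> y_ge0 x_gt0 y_lt_x; rewrite -signr_odd.
case: (odd p) y_lt_x => /= [/(_ isT) y_lt_x|_].
  by rewrite expr1 mulN1r; apply: ltr0_neq0; lra.
by rewrite expr0 mul1r; apply: lt0r_neq0; lra.
Qed.

Section BetaNonzero.
Variables (R : realType) (D : nat).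
Hypothesis D_ge4 : (4 <= D)%N.
Local Notation d := (D%:R : R).

Lemma beta0_neq0 p : p != 1%N -> beta R D p 0 != 0.
Proof.
move=> p_neq1; have d_ge4 := natr_ge4 R D_ge4.
rewrite /beta !addn0 !expr0 exprz_pred; last by neq0.
rewrite subr0 expr1z !mul1r !mulr1; apply: mulf_neq0; first by neq0.
rewrite (_ : _ + _ + _ = (-1) ^+ p * (2 ^+ p / 2 * (d - 2) * (d - 3)
    + (d - 2) ^+ p * (d - 3) ^+ p) + 2 * (d - 2) * (d - 3) ^+ p); last by ring.
have d3p_gt0 : 0 < (d - 3) ^+ p by apply: exprn_gt0; lra.
have d2p_gt0 : 0 < (d - 2) ^+ p by apply: exprn_gt0; lra.
have twop_gt0 : 0 < (2 : R) ^+ p / 2 * (d - 2) * (d - 3).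
  by rewrite -!mulrA; apply: mulr_gt0; rewrite ?exprn_gt0 //; nra.
apply: signr_mulr_addr_neq0 => [||p_odd]; first by apply: mulr_ge0; lra.
  by apply: addr_gt0 => //; apply: mulr_gt0.
have p_ge2 : (2 <= p)%N.
  by case: p p_neq1 p_odd {d3p_gt0 d2p_gt0 twop_gt0} => [|[]].
have : (d - 2) ^+ 2 <= (d - 2) ^+ p by apply: ler_weXn2l => //; lra.
rewrite expr2 => d2p_ge; apply: ltr_pwDl => //.
by rewrite ler_pM2r //; nra.
Qed.

Lemma beta2_neq0 p : beta R D p 2 != 0.
Proof.
have d_ge4 := natr_ge4 R D_ge4.
rewrite /beta exprz_pred; last by neq0.
rewrite (_ : 1 - 2%:Z = -1) // exprN1 !exprD; apply: mulf_neq0; first by neq0.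
rewrite (_ : _ + _ + _ = (-1) ^+ p * (2 ^+ p * 2 * (d - 2) * (d - 3)
    + (d - 3) ^+ p * ((d - 2) ^+ p * (d - 2) ^+ 2))
    + (d - 3) ^+ p * ((d - 2) * (d - 4) ^+ 2 / 2)); last by field.
have d3p_gt0 : 0 < (d - 3) ^+ p by apply: exprn_gt0; lra.
have d2p_ge1 : 1 <= (d - 2) ^+ p by apply: exprn_ege1; lra.
have twop_gt0 : 0 < (2 : R) ^+ p * 2 * (d - 2) * (d - 3).
  by rewrite -!mulrA; apply: mulr_gt0; rewrite ?exprn_gt0 //; nra.
have d4sq_ge0 : 0 <= (d - 4) ^+ 2 := sqr_ge0 _.
have d2sq_ge0 : 0 <= (d - 2) ^+ 2 := sqr_ge0 _.
apply: signr_mulr_addr_neq0 => [||p_odd].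
- by apply: mulr_ge0; [lra | apply: mulr_ge0; [apply: mulr_ge0 |]; lra].
- by apply: ltr_pwDl => //; apply: mulr_ge0; [| apply: mulr_ge0]; lra.
have p_ge1 : (1 <= p)%N by case: p p_odd {d3p_gt0 d2p_ge1 twop_gt0}.
have d2p_ge : d - 2 <= (d - 2) ^+ p.
  by rewrite -[X in X <= _]expr1; apply: ler_weXn2l => //; lra.
apply: ltr_pwDl => //; rewrite ler_pM2l //.
have : 0 <= ((d - 2) ^+ p - (d - 2)) * (d - 2) ^+ 2 by apply: mulr_ge0; lra.
have : 0 <= (d - 2) * ((d - 2) * (d - 2) - (d - 4) * (d - 4) / 2).
  by apply: mulr_ge0; nra.
by rewrite !expr2; nra.
Qed.

End BetaNonzero.

Section BinomialSums.
Variable R : comPzRingType.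
Implicit Types x y : R.

Lemma sum_binomial x y n :
  \sum_(0 <= i < n.+1) 'C(n, i)%:R * (x ^+ (n - i) * y ^+ i) = (x + y) ^+ n.
Proof. by rewrite exprDn big_mkord; apply: eq_bigr => i _; rewrite mulr_natl. Qed.

Lemma sum_binomial_index x y n :
  \sum_(0 <= i < n.+2) i%:R * ('C(n.+1, i)%:R * (x ^+ (n.+1 - i) * y ^+ i))
  = n.+1%:R * y * (x + y) ^+ n.
Proof.
rewrite big_nat_recl //= mul0r add0r -sum_binomial mulr_sumr.
apply: eq_bigr => i _; rewrite subSS.
have bin_id : (i.+1 * 'C(n.+1, i.+1) = n.+1 * 'C(n, i))%N by rewrite mul_bin_diag.
by rewrite mulrA -natrM bin_id natrM exprS; ring.
Qed.

Lemma sum_binomial_index2 x y n :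
  \sum_(0 <= i < n.+3)
      i%:R * (i%:R - 1) * ('C(n.+2, i)%:R * (x ^+ (n.+2 - i) * y ^+ i))
  = n.+2%:R * n.+1%:R * y ^+ 2 * (x + y) ^+ n.
Proof.
rewrite big_nat_recl // big_nat_recl //= !mul0r subrr mulr0 mul0r !add0r.
rewrite -sum_binomial mulr_sumr.
apply: eq_bigr => i _; rewrite !subSS.
rewrite (_ : i.+2%:R - 1 = i.+1%:R :> R); last by rewrite -natr1 addrK.
have bin_id : (i.+2 * i.+1 * 'C(n.+2, i.+2) = n.+2 * n.+1 * 'C(n, i))%N.
  have bin_id1 : (n.+2 * 'C(n.+1, i.+1) = i.+2 * 'C(n.+2, i.+2))%N.
    exact: mul_bin_diag.
  have bin_id0 : (n.+1 * 'C(n, i) = i.+1 * 'C(n.+1, i.+1))%N.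
    by rewrite mul_bin_diag.
  by rewrite [(i.+2 * _)%N]mulnC -mulnA -bin_id1 mulnCA -bin_id0 mulnA.
transitivity ((i.+2 * i.+1 * 'C(n.+2, i.+2))%N%:R * (x ^+ (n - i) * y ^+ i.+2)).
  by rewrite !natrM; ring.
by rewrite bin_id !natrM exprSr exprS; ring.
Qed.

End BinomialSums.

Section AlphaCoefficients.
Variables (R : realType) (D m : nat).
Hypothesis D_ge4 : (4 <= D)%N.
Local Notation d := (D%:R : R).

Lemma alpha0E i : (i <= m.+2)%N ->
  alpha0 R D m.+2 i = - (2 ^+ i * ((i%:R - 1) * (2 - i%:R + d * (i%:R - 1)))
     * 'C(m.+2, i)%:R) / (4 ^+ m.+1 * (d - 1) ^+ m.+1 * (d - 2)).
Proof.
move=> le_im; have d_ge4 := natr_ge4 R D_ge4.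
have fact_i_gt0 : 0 < (i`!)%:R :> R by rewrite ltr0n fact_gt0.
have fact_mi_gt0 : 0 < ((m.+2 - i)`!)%:R :> R by rewrite ltr0n fact_gt0.
rewrite /alpha0 expfzDr // -exprnP subSS subn0 -(bin_fact le_im) !natrM.
rewrite (_ : 2 * (1 - (m.+2)%:Z) = - (2 * m.+1)%N%:Z); last by lia.
rewrite -exprnN exprM (_ : (2 : R) ^+ 2 = 4); last by rewrite expr2; ring.
by field; neq0.
Qed.

Lemma alpha2E i : (i <= m)%N ->
  alpha2 R D m.+2 i = 2 ^+ i * (m.+2%:R * m.+1%:R) * 'C(m, i)%:R
     / (4 ^+ m * (d - 1) ^+ m * (d - 2)).
Proof.
move=> le_im; have d_ge4 := natr_ge4 R D_ge4.
have fact_i_gt0 : 0 < (i`!)%:R :> R by rewrite ltr0n fact_gt0.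
have fact_mi_gt0 : 0 < ((m - i)`!)%:R :> R by rewrite ltr0n fact_gt0.
rewrite /alpha2 expfzDr // -exprnP.
rewrite (_ : (m.+2 - i - 2 = m - i)%N); last by lia.
rewrite (_ : 2 * (2 - (m.+2)%:Z) = - (2 * m)%N%:Z); last by lia.
rewrite !subSS subn0 addn2 !factS -(bin_fact le_im) !natrM -exprnN exprM.
rewrite (_ : (2 : R) ^+ 2 = 4); last by rewrite expr2; ring.
have i_ge0 : 0 <= i%:R :> R := ler0n _ _.
by rewrite -(natr1 i.+1) -(natr1 i); field; neq0.
Qed.

End AlphaCoefficients.

Section DensityOnAnsatz.
Variables (R : realType) (D m : nat) (k r f0 f1 f2 : R).
Hypothesis D_ge4 : (4 <= D)%N.
Local Notation d := (D%:R : R).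
Local Notation RM := (@riem_f R D k r f0 f1 f2).
Local Notation B := (sec_mixed r f1).
Local Notation psi := (sec_sph k r f0).
Local Notation w := (weyl_amp k r f0 f1 f2).
Local Notation tau := (tricci_amp D k r f0 f1 f2).
Local Notation Rsc := (rscal_f D k r f0 f1 f2).

Definition Xf : R := B + (d - 4) / 4 * psi.

Lemma rscal_weyl_ampE : Rsc + 2 * w = 4 * (d - 1) * Xf.
Proof. by rewrite /rscal_f /ricci_eig /weyl_amp /Xf; field. Qed.

Lemma sum_alpha0_Rqmp :
  \sum_(0 <= i < m.+3 | i != 1%N)
      alpha0 R D m.+2 i / beta R D i 0 * Rqmp RM 0 (m.+2 - i) i =
  - (4 ^+ m.+1 * (d - 1) ^+ m.+1 * (d - 2))^-1 *
    ((d - 1) * (m.+2%:R * m.+1%:R * (2 * w) ^+ 2 * (Rsc + 2 * w) ^+ m)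
     + (2 - d) * (m.+2%:R * (2 * w) * (Rsc + 2 * w) ^+ m.+1)
     + (d - 2) * (Rsc + 2 * w) ^+ m.+2).
Proof.
have d_ge4 := natr_ge4 R D_ge4.
rewrite -sum_binomial_index2 -sum_binomial_index -(sum_binomial Rsc (2 * w) m.+2).
rewrite big_mkcond !mulr_sumr -!big_split mulr_sumr /=.
apply: eq_big_nat => i /andP [_ lt_i]; have le_i : (i <= m.+2)%N by lia.
have [->|i_neq1] := eqVneq i 1%N; first by ring.
rewrite /= Rqmp0_riem_f // [_ * beta R D i 0]mulrC [LHS]mulrA divfK;
  last exact: beta0_neq0.
by rewrite alpha0E // exprMn; field; neq0.
Qed.

Lemma sum_alpha2_Rqmp :
  \sum_(0 <= i < m.+1)
      alpha2 R D m.+2 i / beta R D i 2 * Rqmp RM 2 (m.+2 - i - 2) i =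
  m.+2%:R * m.+1%:R * tau ^+ 2 / (4 ^+ m * (d - 1) ^+ m * (d - 2)) *
    (Rsc + 2 * w) ^+ m.
Proof.
have d_ge4 := natr_ge4 R D_ge4.
rewrite -(sum_binomial Rsc (2 * w) m) mulr_sumr.
apply: eq_big_nat => i /andP [_ lt_i].
rewrite (_ : (m.+2 - i - 2 = m - i)%N); last by lia.
rewrite Rqmp2_riem_f // [_ * beta R D i 2]mulrC [LHS]mulrA divfK;
  last exact: beta2_neq0.
by rewrite alpha2E // exprMn; field; neq0.
Qed.

Definition S_n_ansatz : R :=
  Xf ^+ m * (- m.+2%:R * m.+1%:R * (B - psi) * (w - tau)
             + 2 * m.+2%:R * w * Xf - 4 * (d - 1) * Xf ^+ 2).

Lemma S_n_riem_f : S_n m.+2 RM = S_n_ansatz.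
Proof.
have d_ge4 := natr_ge4 R D_ge4.
rewrite /S_n /S_n_ansatz /= sum_alpha0_Rqmp sum_alpha2_Rqmp rscal_weyl_ampE.
rewrite !exprS !exprMn /tricci_amp /weyl_amp /Xf /sec_tr.
by set Xm := (_ ^+ m); field; neq0.
Qed.

End DensityOnAnsatz.

Section PointwiseDerivatives.
Variables (R : realType) (x : R).
Implicit Types (f g : R -> R) (df dg : R).

(* Pointwise forms of [is_deriveM], [is_deriveD], ..., which unify with
   lambda-terms such as [fun s => f s * g s]. *)
Lemma is_derive_mulf f g df dg : is_derive x 1 f df -> is_derive x 1 g dg ->
  is_derive x 1 (fun s => f s * g s) (f x * dg + g x * df).
Proof. exact: is_deriveM. Qed.

Lemma is_derive_addf f g df dg : is_derive x 1 f df -> is_derive x 1 g dg ->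
  is_derive x 1 (fun s => f s + g s) (df + dg).
Proof. exact: is_deriveD. Qed.

Lemma is_derive_subf f g df dg : is_derive x 1 f df -> is_derive x 1 g dg ->
  is_derive x 1 (fun s => f s - g s) (df - dg).
Proof. exact: is_deriveB. Qed.

Lemma is_derive_oppf f df : is_derive x 1 f df ->
  is_derive x 1 (fun s => - f s) (- df).
Proof. exact: is_deriveN. Qed.

Lemma is_derive_expf f df (n : nat) : is_derive x 1 f df ->
  is_derive x 1 (fun s => f s ^+ n) (n%:R * f x ^+ n.-1 * df).
Proof.
have -> : (fun s => f s ^+ n) = f ^+ n by apply: funext => s; rewrite exprfctE.
exact: is_deriveX.
Qed.

Lemma is_derive_invf f df : f x != 0 -> is_derive x 1 f df ->
  is_derive x 1 (fun s => (f s)^-1) (- (f x) ^- 2 * df).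
Proof. exact: is_deriveV. Qed.

Lemma is_derive_derive1 f df : is_derive x 1 f df -> derive1 f x = df.
Proof. by move=> f_der; rewrite derive1E derive_val. Qed.

End PointwiseDerivatives.

Definition gqtg_flux (R : realType) (D n : nat) (k s f0 f1 : R) : R :=
  let B := - f1 / (2 * s) in
  let psi := (k - f0) / s ^+ 2 in
  s ^+ (D - 1) * (B + (D%:R - 4) / 4 * psi) ^+ (n - 1)
    * (2 * (n%:R - 2) * B - (D%:R - 4 + 2 * n%:R) * psi).

Lemma derive1_gqtg_flux (R : realType) (D m : nat) (k : R) (f : R -> R) (r : R) :
  (4 <= D)%N -> twice_diff f -> 0 < r ->
  r ^- (D - 2) * derive1 (fun s => gqtg_flux D m.+2 k s (f s) (derive1 f s)) r
  = S_n_ansatz D m k r (f r) (derive1 f r) (derive1 (derive1 f) r).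
Proof.
move=> D_ge4 [f_der1 f_der2] r_gt0.
have f_der : is_derive r 1 f (derive1 f r) by rewrite derive1E; apply: derivableP.
have f'_der : is_derive r 1 (derive1 f) (derive1 (derive1 f) r).
  by rewrite derive1E; apply: derivableP.
have r_neq0 : r != 0 by rewrite lt0r_neq0.
have r2_neq0 : 2 * r != 0 by rewrite mulf_neq0 // pnatr_eq0.
have B_der := is_derive_mulf (is_derive_oppf f'_der)
  (is_derive_invf (f := fun s => 2 * s) r2_neq0
     (is_derive_mulf (is_derive_cst (2 : R) r 1) (is_derive_id r 1))).
have psi_der := is_derive_mulf (is_derive_subf (is_derive_cst k r 1) f_der)
  (is_derive_invf (f := fun s => s ^+ 2) (expf_neq0 2 r_neq0)
     (is_derive_expf 2 (is_derive_id r 1))).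
have flux_der := is_derive_mulf (is_derive_mulf
  (is_derive_expf (D - 1) (is_derive_id r 1))
  (is_derive_expf (m.+2 - 1) (is_derive_addf B_der
     (is_derive_mulf (is_derive_cst ((D%:R - 4) / 4 : R) r 1) psi_der))))
  (is_derive_subf (is_derive_mulf (is_derive_cst (2 * (m.+2%:R - 2) : R) r 1) B_der)
     (is_derive_mulf (is_derive_cst (D%:R - 4 + 2 * m.+2%:R : R) r 1) psi_der)).
rewrite (is_derive_derive1 flux_der) /cst /=.
have [e ->] : exists e, D = e.+2 by exists D.-2; lia.
rewrite !subSS !subn0 /S_n_ansatz /Xf /weyl_amp /tricci_amp /sec_tr /sec_mixed /sec_sph.
by rewrite !exprS; set Xm := (_ ^+ m); field; neq0.
Qed.

Theorem mainTheorem4 (R : realType) (D n : nat) (k : R) :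
  (4 <= D)%N -> (2 <= n)%N -> (k = 1 \/ k = 0 \/ k = -1) ->
  (forall f : R -> R, twice_diff f -> forall r : R, 0 < r ->
     let d : R := D%:R in
     let B := fun s : R => - derive1 f s / (2 * s) in
     let psi := fun s : R => (k - f s) / s ^+ 2 in
     eval_f (@S_n R D n) k f r
     = r ^- (D - 2) *
       derive1 (fun s => s ^+ (D - 1) * (B s + (d - 4) / 4 * psi s) ^+ (n - 1)
                          * (2 * (n%:R - 2) * B s - (d - 4 + 2 * n%:R) * psi s)) r)
  /\ is_GQTG (@S_n R D n) k.
Proof.
move=> D_ge4; case: n => [|[|m]] // _ _.
have S_n_flux f : twice_diff f -> forall r, 0 < r ->
    eval_f (@S_n R D m.+2) k f r =
    r ^- (D - 2) * derive1 (fun s => gqtg_flux D m.+2 k s (f s) (derive1 f s)) r.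
  by move=> f_diff r r_gt0; rewrite /eval_f S_n_riem_f // derive1_gqtg_flux.
split; first exact: S_n_flux.
exists (gqtg_flux D m.+2 k) => f f_diff r r_gt0.
by rewrite S_n_flux // mulrA mulfV ?mul1r // expf_neq0 // lt0r_neq0.
Qed.
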